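(* Let $k\ge2$ and $\beta\in\mathbb R$, and let $P(z_1,\dots,z_k)=\beta\prod_{i=1}^k(1+z_i)+(1-\beta)\big(1+\prod_{i=1}^kz_i\big)$ be the multivariate Ising partition function of the hypergraph consisting of a single hyperedge $\{1,\dots,k\}$ with activity $\beta$. If either $k=2$ and $-1<\beta<1$, or $k\ge3$ and $-\frac{1}{2^{k-1}-1}<\beta<\frac{1}{2^{k-1}\cos^{k-1}(\frac{\pi}{k-1})+1}$, then $P$ has the Lee-Yang property.
   Context: A multilinear polynomial $P(z_1,\dots,z_n)$ has the Lee-Yang property if $P(\lambda_1,\dots,\lambda_n)\neq0$ whenever $|\lambda_i|\ge1$ for all $i$ and $|\lambda_i|>1$ for at least one $i$. *)

From Stdlib Require Import Reals.
Open Scope R_scope.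

Record Cx := mkCx { re : R; im : R }.

Definition Cx0 : Cx := mkCx 0 0.
Definition Cx1 : Cx := mkCx 1 0.
Definition Cx_of_R (a : R) : Cx := mkCx a 0.
Definition Cxadd (z w : Cx) : Cx := mkCx (re z + re w) (im z + im w).
Definition Cxmul (z w : Cx) : Cx :=
  mkCx (re z * re w - im z * im w) (re z * im w + im z * re w).
Definition Cxmod (z : Cx) : R := sqrt (re z * re z + im z * im z).

Fixpoint Cxprod (n : nat) (f : nat -> Cx) : Cx :=
  match n with
  | O => Cx1
  | S m => Cxmul (Cxprod m f) (f m)
  end.

Definition ising_edge (k : nat) (beta : R) (z : nat -> Cx) : Cx :=
  Cxadd (Cxmul (Cx_of_R beta) (Cxprod k (fun i => Cxadd Cx1 (z i))))
        (Cxmul (Cx_of_R (1 - beta)) (Cxadd Cx1 (Cxprod k z))).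

Definition LeeYang (n : nat) (P : (nat -> Cx) -> Cx) : Prop :=
  forall z : nat -> Cx,
    (forall i, (i < n)%nat -> 1 <= Cxmod (z i)) ->
    (exists i, (i < n)%nat /\ 1 < Cxmod (z i)) ->
    P z <> Cx0.

From Stdlib Require Import Reals Lra Lia ZArith.
Open Scope R_scope.

(* Isolate a variable z_j with |z_j| > 1 and put w_i = 1/z_i for the others, a point of the
   closed unit polydisk.  Then P(z) = (prod_{i<>j} z_i) (A(w) + z_j B(w)) with
   U = prod (1 + w_i), A = beta U + (1 - beta) prod w_i and B = beta U + 1 - beta.
   On the torus |A| = |B|, because conj(prod w_i) A = conj B.  Both A and B are affine in each
   w_i, so as long as B has no zero on the closed polydisk, a one-variable maximum principle
   for |A/B| carries |A| <= |B| from the torus to the whole polydisk, one variable at a time;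
   A + z_j B = 0 then forces |z_j| <= 1.
   The bounds on beta are what excludes zeros of B.  For beta < 0 use |U| <= 2^(k-1).
   For beta > 0, B = 0 makes U a negative real, so the arguments t_i in (-pi/2, pi/2) of the
   factors 1 + w_i add up to at least pi in absolute value; since |1 + w_i| <= 2 cos t_i,
   concavity of cos and AM-GM give |U| <= (2 cos (pi/(k-1)))^(k-1). *)

Lemma Cx_ext (z w : Cx) : re z = re w -> im z = im w -> z = w.
Proof. destruct z, w; simpl; intros -> ->; reflexivity. Qed.

Definition Cxopp (z : Cx) : Cx := mkCx (- re z) (- im z).
Definition Cxsub (z w : Cx) : Cx := Cxadd z (Cxopp w).

Lemma Cx_ring_theory : ring_theory Cx0 Cx1 Cxadd Cxmul Cxsub Cxopp (@eq Cx).
Proof. constructor; intros; apply Cx_ext; simpl; ring. Qed.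

Add Ring Cx_ring : Cx_ring_theory.

Definition Cxnorm2 (z : Cx) : R := re z * re z + im z * im z.
Definition Cxconj (z : Cx) : Cx := mkCx (re z) (- im z).
Definition Cxinv (z : Cx) : Cx := mkCx (re z / Cxnorm2 z) (- im z / Cxnorm2 z).

Lemma Cxnorm2_ge0 (z : Cx) : 0 <= Cxnorm2 z.
Proof. unfold Cxnorm2; nra. Qed.

Lemma Cxnorm2_mul (z w : Cx) : Cxnorm2 (Cxmul z w) = Cxnorm2 z * Cxnorm2 w.
Proof. unfold Cxnorm2; simpl; ring. Qed.

Lemma Cxnorm2_conj (z : Cx) : Cxnorm2 (Cxconj z) = Cxnorm2 z.
Proof. unfold Cxnorm2; simpl; ring. Qed.

Lemma Cxnorm2_eq0 (z : Cx) : Cxnorm2 z = 0 -> z = Cx0.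
Proof. destruct z as [x y]; unfold Cxnorm2; simpl; intros H; apply Cx_ext; simpl; nra. Qed.

Lemma Cxnorm2_Cx0 : Cxnorm2 Cx0 = 0.
Proof. unfold Cxnorm2; simpl; ring. Qed.

Lemma Cxmul_integral (z w : Cx) : Cxmul z w = Cx0 -> z = Cx0 \/ w = Cx0.
Proof.
  intros H; apply (f_equal Cxnorm2) in H.
  rewrite Cxnorm2_mul, Cxnorm2_Cx0 in H.
  destruct (Rmult_integral _ _ H); [left | right]; apply Cxnorm2_eq0; assumption.
Qed.

Lemma Cxnorm2_eq_of_add_eq0 (a b : Cx) : Cxadd a b = Cx0 -> Cxnorm2 a = Cxnorm2 b.
Proof.
  destruct a as [a1 a2], b as [b1 b2]; intros H; injection H as H1 H2.
  unfold Cxnorm2; simpl; nra.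
Qed.

Lemma Cxmul_conj (z : Cx) : Cxmul z (Cxconj z) = Cx_of_R (Cxnorm2 z).
Proof. apply Cx_ext; unfold Cxnorm2; simpl; ring. Qed.

Lemma Cxconj_mul (z w : Cx) : Cxconj (Cxmul z w) = Cxmul (Cxconj z) (Cxconj w).
Proof. apply Cx_ext; simpl; ring. Qed.

Lemma Cxmul_inv (z : Cx) : 0 < Cxnorm2 z -> Cxmul z (Cxinv z) = Cx1.
Proof.
  destruct z as [x y]; unfold Cxinv, Cxnorm2; simpl; intros H.
  apply Cx_ext; simpl; field; lra.
Qed.

Lemma Cxnorm2_inv_le1 (z : Cx) : 1 <= Cxnorm2 z -> Cxnorm2 (Cxinv z) <= 1.
Proof.
  intros H.
  assert (E : Cxnorm2 (Cxinv z) * Cxnorm2 z = 1).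
  { rewrite Rmult_comm, <- Cxnorm2_mul, Cxmul_inv by lra. unfold Cxnorm2; simpl; ring. }
  nra.
Qed.

Lemma Cxnorm2_ge1_of_Cxmod (z : Cx) : 1 <= Cxmod z -> 1 <= Cxnorm2 z.
Proof.
  change (Cxmod z) with (sqrt (Cxnorm2 z)); intros H.
  pose proof (sqrt_sqrt _ (Cxnorm2_ge0 z)); nra.
Qed.

Lemma Cxnorm2_gt1_of_Cxmod (z : Cx) : 1 < Cxmod z -> 1 < Cxnorm2 z.
Proof.
  change (Cxmod z) with (sqrt (Cxnorm2 z)); intros H.
  pose proof (sqrt_sqrt _ (Cxnorm2_ge0 z)); nra.
Qed.

Fixpoint Rsum (n : nat) (f : nat -> R) : R :=
  match n with O => 0 | S m => Rsum m f + f m end.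

Fixpoint Rprod (n : nat) (f : nat -> R) : R :=
  match n with O => 1 | S m => Rprod m f * f m end.

Lemma Rsum_ext n f g : (forall i, (i < n)%nat -> f i = g i) -> Rsum n f = Rsum n g.
Proof.
  induction n as [|n IH]; simpl; intros H; [reflexivity|].
  rewrite IH by (intros; apply H; lia); rewrite H by lia; reflexivity.
Qed.

Lemma Rsum_le n f g : (forall i, (i < n)%nat -> f i <= g i) -> Rsum n f <= Rsum n g.
Proof.
  induction n as [|n IH]; simpl; intros H; [lra|].
  pose proof (H n ltac:(lia)); pose proof (IH (fun i Hi => H i ltac:(lia))); lra.
Qed.

Lemma Rsum_affine n (p q : R) (x : nat -> R) :
  Rsum n (fun i => p + q * x i) = INR n * p + q * Rsum n x.
Proof. induction n as [|n IH]; simpl Rsum; [simpl; ring|]. rewrite IH, S_INR; ring. Qed.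

Lemma Rsum_abs n f : Rabs (Rsum n f) <= Rsum n (fun i => Rabs (f i)).
Proof.
  induction n as [|n IH]; simpl; [rewrite Rabs_R0; lra|].
  eapply Rle_trans; [apply Rabs_triang | lra].
Qed.

Lemma Rprod_ext n f g : (forall i, (i < n)%nat -> f i = g i) -> Rprod n f = Rprod n g.
Proof.
  induction n as [|n IH]; simpl; intros H; [reflexivity|].
  rewrite IH by (intros; apply H; lia); rewrite H by lia; reflexivity.
Qed.

Lemma Rprod_nonneg n f : (forall i, (i < n)%nat -> 0 <= f i) -> 0 <= Rprod n f.
Proof.
  induction n as [|n IH]; simpl; intros H; [lra|].
  apply Rmult_le_pos; [apply IH; intros; apply H | apply H]; lia.
Qed.

Lemma Rprod_le n f g : (forall i, (i < n)%nat -> 0 <= f i <= g i) -> Rprod n f <= Rprod n g.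
Proof.
  induction n as [|n IH]; simpl; intros H; [lra|].
  apply Rmult_le_compat;
    [apply Rprod_nonneg; intros; apply H | apply H | apply IH; intros; apply H | apply H]; lia.
Qed.

Lemma Rprod_const n K : Rprod n (fun _ => K) = K ^ n.
Proof. induction n as [|n IH]; simpl; [reflexivity|]. rewrite IH; ring. Qed.

Lemma Rprod_scale n K f : Rprod n (fun i => K * f i) = K ^ n * Rprod n f.
Proof. induction n as [|n IH]; simpl; [ring|]. rewrite IH; ring. Qed.

Lemma Rprod_le_exp_Rsum n p : (forall i, (i < n)%nat -> 0 <= p i) ->
  Rprod n p <= exp (Rsum n (fun i => p i - 1)).
Proof.
  induction n as [|n IH]; simpl; intros H; [rewrite exp_0; lra|].
  rewrite exp_plus; apply Rmult_le_compat.
  - apply Rprod_nonneg; intros; apply H; lia.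
  - apply H; lia.
  - apply IH; intros; apply H; lia.
  - pose proof (exp_ineq1_le (p n - 1)); lra.
Qed.

Lemma Rprod_le_pow_of_Rsum_le n p K : 0 < K -> (forall i, (i < n)%nat -> 0 <= p i) ->
  Rsum n p <= INR n * K -> Rprod n p <= K ^ n.
Proof.
  intros HK Hp Hs.
  assert (E : Rprod n p = K ^ n * Rprod n (fun i => / K * p i)).
  { rewrite Rprod_scale, <- Rmult_assoc, <- Rpow_mult_distr, Rinv_r, pow1 by lra; ring. }
  assert (Hsum : Rsum n (fun i => / K * p i - 1) <= 0).
  { rewrite (Rsum_ext n _ (fun i => -1 + / K * p i)) by (intros; ring).
    rewrite Rsum_affine.
    assert (/ K * Rsum n p <= INR n) by
      (apply Rmult_le_reg_l with K; [lra|]; rewrite <- Rmult_assoc, Rinv_r by lra; lra).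
    lra. }
  assert (Hexp : exp (Rsum n (fun i => / K * p i - 1)) <= exp 0)
    by (destruct Hsum as [Hlt | ->]; [left; apply exp_increasing | right]; auto).
  rewrite exp_0 in Hexp.
  rewrite E; rewrite <- (Rmult_1_r (K ^ n)) at 2.
  apply Rmult_le_compat_l; [apply pow_le; lra|].
  eapply Rle_trans; [apply Rprod_le_exp_Rsum | exact Hexp].
  intros i Hi; apply Rmult_le_pos; [left; apply Rinv_0_lt_compat; lra | auto].
Qed.

Lemma Cxprod_ext n f g : (forall i, (i < n)%nat -> f i = g i) -> Cxprod n f = Cxprod n g.
Proof.
  induction n as [|n IH]; simpl; intros H; [reflexivity|].
  rewrite IH by (intros; apply H; lia); rewrite H by lia; reflexivity.
Qed.

Lemma Cxprod_mul n f g :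
  Cxprod n (fun i => Cxmul (f i) (g i)) = Cxmul (Cxprod n f) (Cxprod n g).
Proof. induction n as [|n IH]; simpl; [ring|]. rewrite IH; ring. Qed.

Lemma Cxprod_one n : Cxprod n (fun _ => Cx1) = Cx1.
Proof. induction n as [|n IH]; simpl; [reflexivity|]. rewrite IH; ring. Qed.

Lemma Cxnorm2_Cxprod n f : Cxnorm2 (Cxprod n f) = Rprod n (fun i => Cxnorm2 (f i)).
Proof.
  induction n as [|n IH]; simpl; [unfold Cxnorm2; simpl; ring|].
  rewrite Cxnorm2_mul, IH; reflexivity.
Qed.

(* [skip j] enumerates the indices different from [j] in increasing order. *)
Definition skip (j i : nat) : nat := if (i <? j)%nat then i else S i.

Lemma skip_neq j i : skip j i <> j.
Proof. unfold skip; destruct (Nat.ltb_spec i j); lia. Qed.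

Lemma skip_lt n j i : (j < S n)%nat -> (i < n)%nat -> (skip j i < S n)%nat.
Proof. unfold skip; destruct (Nat.ltb_spec i j); lia. Qed.

Lemma Cxprod_skip n j f : (j < S n)%nat ->
  Cxprod (S n) f = Cxmul (Cxprod n (fun i => f (skip j i))) (f j).
Proof.
  revert j; induction n as [|n IH]; intros j Hj.
  - replace j with 0%nat by lia; reflexivity.
  - change (Cxprod (S (S n)) f) with (Cxmul (Cxprod (S n) f) (f (S n))).
    destruct (Nat.eq_dec j (S n)) as [->|Hne].
    + f_equal; apply Cxprod_ext; intros i Hi; unfold skip.
      destruct (Nat.ltb_spec i (S n)); [reflexivity | lia].
    + rewrite (IH j) by lia; simpl Cxprod.
      replace (skip j n) with (S n) by (unfold skip; destruct (Nat.ltb_spec n j); lia).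
      ring.
Qed.

Definition upd (w : nat -> Cx) (j : nat) (z : Cx) : nat -> Cx :=
  fun i => if (i =? j)%nat then z else w i.

Lemma upd_eq w j z : upd w j z j = z.
Proof. unfold upd; rewrite Nat.eqb_refl; reflexivity. Qed.

Lemma upd_neq w j z i : i <> j -> upd w j z i = w i.
Proof. unfold upd; intros; destruct (Nat.eqb_spec i j); [lia | reflexivity]. Qed.

(** * A maximum principle for quotients of affine functions *)

Definition lerp (p q : Cx) (s : R) : Cx :=
  mkCx ((1 - s) * re p + s * re q) ((1 - s) * im p + s * im q).

Lemma lerp_0 p q : lerp p q 0 = p.
Proof. apply Cx_ext; simpl; ring. Qed.

Lemma lerp_1 p q : lerp p q 1 = q.
Proof. apply Cx_ext; simpl; ring. Qed.

Lemma chord_through (z : Cx) : Cxnorm2 z < 1 ->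
  exists p q s, Cxnorm2 p = 1 /\ Cxnorm2 q = 1 /\ 0 < s < 1 /\ lerp p q s = z.
Proof.
  destruct z as [x y]; unfold Cxnorm2; simpl; intros Hz.
  set (r := sqrt (1 - y * y)).
  assert (Hr : r * r = 1 - y * y) by (apply sqrt_sqrt; nra).
  assert (Hr0 : 0 <= r) by apply sqrt_pos.
  assert (Hxr : - r < x < r) by (split; nra).
  set (s := (x + r) / (2 * r)).
  assert (Hs : s * (2 * r) = x + r) by (unfold s; field; lra).
  exists (mkCx (- r) y), (mkCx r y), s; unfold Cxnorm2; simpl.
  split; [nra | split; [nra | split; [split; nra | apply Cx_ext; simpl; lra]]].
Qed.

Lemma segment_exits_disk (p q : Cx) : Cxnorm2 p < 1 -> 1 < Cxnorm2 q ->
  exists s, 0 < s < 1 /\ Cxnorm2 (lerp p q s) = 1.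
Proof.
  intros Hp Hq.
  set (f := fun s => Cxnorm2 (lerp p q s) - 1).
  assert (Hf : continuity f) by (unfold f, lerp, Cxnorm2; simpl; reg).
  assert (Hf0 : f 0 < 0) by (unfold f; rewrite lerp_0; lra).
  assert (Hf1 : 0 < f 1) by (unfold f; rewrite lerp_1; lra).
  destruct (IVT f 0 1 Hf Rlt_0_1 Hf0 Hf1) as [s [[Hs0 Hs1] Hfs]].
  exists s; split; [split | unfold f in Hfs; lra].
  - destruct Hs0 as [| <-]; [assumption | lra].
  - destruct Hs1 as [| ->]; [assumption | lra].
Qed.

Section AffineQuotient.

Variables a b c d : Cx.

Definition gap (z : Cx) : R := Cxnorm2 (Cxadd c (Cxmul d z)) - Cxnorm2 (Cxadd a (Cxmul b z)).

(* The quadratic part of [gap] is [(|d|^2 - |b|^2) |z|^2]: [gap] is concave or convex. *)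
Lemma gap_lerp p q s :
  gap (lerp p q s) = (1 - s) * gap p + s * gap q
    - (Cxnorm2 d - Cxnorm2 b) * (s * (1 - s)) * Cxnorm2 (Cxsub p q).
Proof.
  destruct p as [p1 p2], q as [q1 q2]; unfold gap, lerp, Cxnorm2, Cxsub, Cxopp; simpl; ring.
Qed.

Hypothesis denominator_neq0 : forall z, Cxnorm2 z <= 1 -> Cxadd c (Cxmul d z) <> Cx0.
Hypothesis le_on_circle : forall z, Cxnorm2 z = 1 ->
  Cxnorm2 (Cxadd a (Cxmul b z)) <= Cxnorm2 (Cxadd c (Cxmul d z)).

Lemma affine_quotient_max_principle z : Cxnorm2 z <= 1 ->
  Cxnorm2 (Cxadd a (Cxmul b z)) <= Cxnorm2 (Cxadd c (Cxmul d z)).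
Proof.
  intros Hz.
  assert (Hcircle : forall q, Cxnorm2 q = 1 -> 0 <= gap q)
    by (intros q Hq; unfold gap; specialize (le_on_circle q Hq); lra).
  enough (0 <= gap z) by (unfold gap in *; lra).
  destruct (Req_dec (Cxnorm2 z) 1) as [E | E]; [auto|].
  destruct (Rle_lt_dec 0 (gap z)) as [| Hneg]; [assumption | exfalso].
  destruct (Rle_or_lt (Cxnorm2 d) (Cxnorm2 b)) as [Hconcave | Hconvex].
  - (* [z] lies on a chord, whose endpoints bound [gap] from below *)
    destruct (chord_through z ltac:(lra)) as (p & q & s & Hp & Hq & Hs & <-).
    rewrite gap_lerp in Hneg.
    pose proof (Hcircle p Hp); pose proof (Hcircle q Hq).
    assert (0 <= (1 - s) * gap p) by (apply Rmult_le_pos; lra).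
    assert (0 <= s * gap q) by (apply Rmult_le_pos; lra).
    assert (0 <= (Cxnorm2 b - Cxnorm2 d) * (s * (1 - s)) * Cxnorm2 (Cxsub p q))
      by (pose proof (Cxnorm2_ge0 (Cxsub p q)); apply Rmult_le_pos; [apply Rmult_le_pos|]; nra).
    lra.
  - (* the zero of the denominator lies outside the disk; follow the segment from [z] to it *)
    assert (Hd : 0 < Cxnorm2 d) by (pose proof (Cxnorm2_ge0 b); lra).
    set (pole := Cxmul (Cxopp c) (Cxinv d)).
    assert (Hpole : Cxadd c (Cxmul d pole) = Cx0).
    { transitivity (Cxsub c (Cxmul c (Cxmul d (Cxinv d)))); [unfold pole; ring|].
      rewrite Cxmul_inv by assumption; ring. }
    assert (Hout : 1 < Cxnorm2 pole).
    { destruct (Rle_or_lt (Cxnorm2 pole) 1) as [Hin|]; [|assumption].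
      exfalso; exact (denominator_neq0 pole Hin Hpole). }
    assert (Hgpole : gap pole <= 0).
    { unfold gap; rewrite Hpole, Cxnorm2_Cx0.
      pose proof (Cxnorm2_ge0 (Cxadd a (Cxmul b pole))); lra. }
    destruct (segment_exits_disk z pole ltac:(lra) Hout) as [s [Hs Hq]].
    pose proof (Hcircle _ Hq) as Hg; rewrite gap_lerp in Hg.
    assert ((1 - s) * gap z < 0) by nra.
    assert (s * gap pole <= 0) by nra.
    assert (0 <= (Cxnorm2 d - Cxnorm2 b) * (s * (1 - s)) * Cxnorm2 (Cxsub z pole))
      by (pose proof (Cxnorm2_ge0 (Cxsub z pole)); apply Rmult_le_pos; [apply Rmult_le_pos|]; nra).
    lra.
Qed.

End AffineQuotient.

(** * The coefficients A and B on the polydisk *)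

Definition in_polydisk (m : nat) (w : nat -> Cx) : Prop :=
  forall i, (i < m)%nat -> Cxnorm2 (w i) <= 1.

Definition Uprod (m : nat) (w : nat -> Cx) : Cx := Cxprod m (fun i => Cxadd Cx1 (w i)).

Lemma Uprod_mul_conj m w : (forall i, (i < m)%nat -> Cxnorm2 (w i) = 1) ->
  Cxmul (Uprod m w) (Cxconj (Cxprod m w)) = Cxconj (Uprod m w).
Proof.
  unfold Uprod; induction m as [|m IH]; intros Hw; [apply Cx_ext; simpl; ring|].
  simpl; rewrite !Cxconj_mul.
  transitivity (Cxmul (Cxmul (Cxprod m (fun i => Cxadd Cx1 (w i))) (Cxconj (Cxprod m w)))
                      (Cxadd (Cxconj (w m)) (Cxmul (w m) (Cxconj (w m))))); [ring|].
  rewrite IH by (intros; apply Hw; lia).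
  rewrite Cxmul_conj, (Hw m) by lia.
  f_equal; apply Cx_ext; simpl; ring.
Qed.

Section Coefficients.

Variables beta gamma : R.

Definition edgeA (m : nat) (w : nat -> Cx) : Cx :=
  Cxadd (Cxmul (Cx_of_R beta) (Uprod m w)) (Cxmul (Cx_of_R gamma) (Cxprod m w)).

Definition edgeB (m : nat) (w : nat -> Cx) : Cx :=
  Cxadd (Cxmul (Cx_of_R beta) (Uprod m w)) (Cx_of_R gamma).

Lemma Cxnorm2_edgeA_torus m w : (forall i, (i < m)%nat -> Cxnorm2 (w i) = 1) ->
  Cxnorm2 (edgeA m w) = Cxnorm2 (edgeB m w).
Proof.
  intros Hw.
  assert (HW : Cxnorm2 (Cxprod m w) = 1).
  { rewrite Cxnorm2_Cxprod, (Rprod_ext m _ (fun _ => 1)), Rprod_const by auto; apply pow1. }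
  assert (E : Cxmul (edgeA m w) (Cxconj (Cxprod m w)) = Cxconj (edgeB m w)).
  { unfold edgeA, edgeB.
    transitivity (Cxadd (Cxmul (Cx_of_R beta) (Cxmul (Uprod m w) (Cxconj (Cxprod m w))))
                        (Cxmul (Cx_of_R gamma) (Cxmul (Cxprod m w) (Cxconj (Cxprod m w)))));
      [ring|].
    rewrite Uprod_mul_conj, Cxmul_conj, HW by assumption.
    apply Cx_ext; simpl; ring. }
  rewrite <- (Cxnorm2_conj (edgeB m w)), <- E, Cxnorm2_mul, Cxnorm2_conj, HW; ring.
Qed.

Lemma Cxnorm2_edgeA_le m :
  (forall w, in_polydisk m w -> edgeB m w <> Cx0) ->
  forall w, in_polydisk m w -> Cxnorm2 (edgeA m w) <= Cxnorm2 (edgeB m w).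
Proof.
  intros HB.
  (* variables [j], [j+1], ... are on the unit circle; free them one at a time *)
  enough (H : forall j w, (j <= m)%nat -> in_polydisk m w ->
            (forall i, (j <= i < m)%nat -> Cxnorm2 (w i) = 1) ->
            Cxnorm2 (edgeA m w) <= Cxnorm2 (edgeB m w))
    by (intros w Hw; apply (H m w); [lia | assumption | lia]).
  induction j as [|j IH]; intros w Hj Hw Htorus.
  - right; apply Cxnorm2_edgeA_torus; intros; apply Htorus; lia.
  - destruct m as [|n]; [lia|].
    set (U' := Cxprod n (fun i => Cxadd Cx1 (w (skip j i)))).
    set (W' := Cxprod n (fun i => w (skip j i))).
    set (bU := Cxmul (Cx_of_R beta) U').
    assert (Haffine : forall v, (forall i, i <> j -> v i = w i) ->
      edgeA (S n) v = Cxadd bU (Cxmul (Cxadd bU (Cxmul (Cx_of_R gamma) W')) (v j)) /\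
      edgeB (S n) v = Cxadd (Cxadd bU (Cx_of_R gamma)) (Cxmul bU (v j))).
    { intros v Hv.
      assert (EU : Uprod (S n) v = Cxmul U' (Cxadd Cx1 (v j))).
      { unfold Uprod; rewrite (Cxprod_skip n j) by lia; f_equal.
        apply Cxprod_ext; intros i _; rewrite Hv by apply skip_neq; reflexivity. }
      assert (EW : Cxprod (S n) v = Cxmul W' (v j)).
      { rewrite (Cxprod_skip n j) by lia; f_equal.
        apply Cxprod_ext; intros i _; rewrite Hv by apply skip_neq; reflexivity. }
      unfold edgeA, edgeB, bU; rewrite EU, EW; split; ring. }
    assert (Hupd : forall z, Cxnorm2 z <= 1 -> in_polydisk (S n) (upd w j z)).
    { intros z Hz i Hi; unfold upd; destruct (Nat.eqb_spec i j); auto. }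
    destruct (Haffine w (fun _ _ => eq_refl)) as [-> ->].
    apply affine_quotient_max_principle; [intros z Hz | intros z Hz | apply Hw; lia];
      destruct (Haffine (upd w j z) (upd_neq w j z)) as [EA EB]; rewrite upd_eq in EA, EB;
      rewrite <- ?EA, <- EB.
    + apply HB, Hupd; assumption.
    + apply IH; [lia | apply Hupd; lra |].
      intros i Hi; unfold upd; destruct (Nat.eqb_spec i j); [assumption | apply Htorus; lia].
Qed.

End Coefficients.

(** * Zeros of B *)

Lemma edgeB_neq0_nonpos beta gamma m w : beta <= 0 -> - beta * 2 ^ m < gamma ->
  in_polydisk m w -> edgeB beta gamma m w <> Cx0.
Proof.
  intros Hb Hg Hw HB.
  assert (HU : Cxnorm2 (Uprod m w) <= 2 ^ m * 2 ^ m).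
  { rewrite <- Rpow_mult_distr, <- Rprod_const; unfold Uprod; rewrite Cxnorm2_Cxprod.
    apply Rprod_le; intros i Hi; split; [apply Cxnorm2_ge0|].
    specialize (Hw i Hi); destruct (w i) as [x y]; unfold Cxnorm2 in *; simpl in *; nra. }
  assert (E : Cxnorm2 (Cxmul (Cx_of_R beta) (Uprod m w)) = Cxnorm2 (Cx_of_R gamma))
    by (apply Cxnorm2_eq_of_add_eq0; exact HB).
  rewrite Cxnorm2_mul in E; unfold Cxnorm2 at 1 3 in E; simpl in E.
  assert (0 <= - beta * 2 ^ m) by (pose proof (pow_le 2 m ltac:(lra)); nra).
  nra.
Qed.

Lemma cos_le_tangent a x : 0 < a < PI / 2 -> 0 <= x <= PI / 2 ->
  cos x <= cos a - sin a * (x - a).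
Proof.
  intros Ha Hx.
  assert (Hderiv : forall t, derivable_pt_lim cos t (- sin t))
    by (intros; apply derivable_pt_lim_cos).
  destruct (Rtotal_order x a) as [Hlt | [-> | Hgt]].
  - destruct (MVT_cor2 cos (fun t => - sin t) x a Hlt (fun t _ => Hderiv t)) as [t [Ht1 Ht2]].
    assert (sin t <= sin a) by (apply sin_incr_1; lra).
    nra.
  - lra.
  - destruct (MVT_cor2 cos (fun t => - sin t) a x Hgt (fun t _ => Hderiv t)) as [t [Ht1 Ht2]].
    assert (sin a <= sin t) by (apply sin_incr_1; lra).
    nra.
Qed.

(* Concavity of [cos] on [0, pi/2] and AM-GM. *)
Lemma Rprod_2cos_le m x : (3 <= m)%nat ->
  (forall i, (i < m)%nat -> 0 <= x i <= PI / 2) -> PI <= Rsum m x ->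
  Rprod m (fun i => 2 * cos (x i)) <= (2 * cos (PI / INR m)) ^ m.
Proof.
  intros Hm Hx Hsum.
  assert (HmR : 3 <= INR m) by (replace 3 with (INR 3) by (simpl; ring); apply le_INR; exact Hm).
  pose proof PI_RGT_0.
  set (a := PI / INR m).
  assert (Hma : INR m * a = PI) by (unfold a; field; lra).
  assert (Ha : 0 < a < PI / 2) by (split; nra).
  assert (Hcos : 0 < cos a) by (apply cos_gt_0; lra).
  assert (Hsin : 0 < sin a) by (apply sin_gt_0; lra).
  apply Rprod_le_pow_of_Rsum_le; [lra | |].
  { intros i Hi; pose proof (Hx i Hi); pose proof (cos_ge_0 (x i)); lra. }
  apply Rle_trans with (Rsum m (fun i => 2 * (cos a + sin a * a) + (- 2 * sin a) * x i)).
  - apply Rsum_le; intros i Hi; pose proof (cos_le_tangent a (x i) Ha (Hx i Hi)); lra.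
  - rewrite Rsum_affine; nra.
Qed.

Definition polar (r t : R) : Cx := mkCx (r * cos t) (r * sin t).

(* An argument of [u] when [0 < re u]; on the imaginary axis it is [0], since [y / 0 = 0]. *)
Definition Cxarg (u : Cx) : R := atan (im u / re u).

Lemma Cxprod_polar m r t :
  Cxprod m (fun i => polar (r i) (t i)) = polar (Rprod m r) (Rsum m t).
Proof.
  induction m as [|m IH]; simpl.
  - apply Cx_ext; simpl; rewrite ?cos_0, ?sin_0; ring.
  - rewrite IH; apply Cx_ext; simpl; rewrite ?cos_plus, ?sin_plus; ring.
Qed.

Lemma polar_Cxarg (u : Cx) : 0 < re u -> u = polar (Cxmod u) (Cxarg u).
Proof.
  destruct u as [x y]; unfold polar, Cxarg, Cxmod; simpl; intros Hx.
  rewrite cos_atan, sin_atan.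
  set (s := sqrt (1 + (y / x)²)).
  assert (Hs : 0 < s) by (apply sqrt_lt_R0; unfold Rsqr; nra).
  assert (E : sqrt (x * x + y * y) = x * s).
  { assert (Hs2 : s * s = 1 + (y / x)²) by (apply sqrt_sqrt; unfold Rsqr; nra).
    apply sqrt_lem_1; [nra | nra |]; unfold Rsqr in Hs2.
    replace (x * s * (x * s)) with (x * x * (s * s)) by ring; rewrite Hs2; field; lra. }
  rewrite E; apply Cx_ext; simpl; field; lra.
Qed.

Lemma polar_disk_shift (w : Cx) : Cxnorm2 w <= 1 ->
  let u := Cxadd Cx1 w in
  u = polar (Cxmod u) (Cxarg u) /\ Rabs (Cxarg u) < PI / 2 /\ Cxmod u <= 2 * cos (Cxarg u).
Proof.
  intros Hw u.
  assert (Hu : Cxnorm2 u <= 2 * re u) by (unfold u, Cxnorm2 in *; simpl; nra).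
  assert (Habs : Rabs (Cxarg u) < PI / 2)
    by (pose proof (atan_bound (im u / re u)); unfold Cxarg; apply Rabs_def1; lra).
  destruct (Rle_lt_or_eq_dec 0 (re u) ltac:(unfold Cxnorm2 in Hu; nra)) as [Hre | Hre].
  - pose proof (polar_Cxarg u Hre) as Hpol.
    assert (Hmod : Cxmod u * Cxmod u = Cxnorm2 u) by apply sqrt_sqrt, Cxnorm2_ge0.
    assert (Hcos : re u = Cxmod u * cos (Cxarg u)) by (rewrite Hpol at 1; reflexivity).
    assert (0 < Cxmod u) by (unfold Cxmod; apply sqrt_lt_R0; unfold Cxnorm2 in *; nra).
    repeat split; [assumption | assumption | nra].
  - assert (Hu0 : u = Cx0) by (apply Cxnorm2_eq0; unfold Cxnorm2 in *; nra).
    unfold Cxarg, Cxmod; rewrite Hu0; simpl.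
    rewrite Rdiv_0_l, atan_0, Rmult_0_l, Rplus_0_r, sqrt_0, cos_0.
    repeat split; [apply Cx_ext; simpl; ring | rewrite Rabs_R0; pose proof PI_RGT_0; lra | lra].
Qed.

Lemma Uprod_polar m w : in_polydisk m w ->
  Uprod m w = polar (Rprod m (fun i => Cxmod (Cxadd Cx1 (w i))))
                    (Rsum m (fun i => Cxarg (Cxadd Cx1 (w i)))).
Proof.
  intros Hw; rewrite <- Cxprod_polar; unfold Uprod.
  apply Cxprod_ext; intros i Hi; apply (polar_disk_shift (w i) (Hw i Hi)).
Qed.

Lemma PI_le_Rabs x : sin x = 0 -> cos x < 0 -> PI <= Rabs x.
Proof.
  intros Hs Hc; destruct (sin_eq_0_0 x Hs) as [k ->].
  pose proof PI_RGT_0.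
  destruct (Z.lt_trichotomy k 0) as [Hk | [-> | Hk]].
  - assert (IZR k <= -1) by (apply IZR_le; lia).
    rewrite Rabs_left by nra; nra.
  - rewrite Rmult_0_l, cos_0 in Hc; lra.
  - assert (1 <= IZR k) by (apply IZR_le; lia).
    rewrite Rabs_right by nra; nra.
Qed.

(* At most two angles in (-pi/2, pi/2) cannot have absolute values summing to pi. *)
Lemma Rprod_polar_factors_le m r t :
  (forall i, (i < m)%nat -> Rabs (t i) < PI / 2 /\ 0 <= r i <= 2 * cos (Rabs (t i))) ->
  PI <= Rsum m (fun i => Rabs (t i)) -> Rprod m r <= (2 * cos (PI / INR m)) ^ m.
Proof.
  intros Ht Hsum.
  destruct (le_lt_dec 3 m) as [Hm | Hm].
  - eapply Rle_trans; [apply Rprod_le with (g := fun i => 2 * cos (Rabs (t i))) |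
                       apply Rprod_2cos_le; [exact Hm | | exact Hsum]];
      intros i Hi; specialize (Ht i Hi); [lra | split; [apply Rabs_pos | lra]].
  - exfalso; pose proof PI_RGT_0.
    destruct m as [|[|[|m]]]; simpl in Hsum; [lra | | | lia].
    + pose proof (Ht 0%nat ltac:(lia)); lra.
    + pose proof (Ht 0%nat ltac:(lia)); pose proof (Ht 1%nat ltac:(lia)); lra.
Qed.

Lemma edgeB_neq0_pos beta gamma m w : 0 < beta -> 0 < gamma ->
  beta * (2 * cos (PI / INR m)) ^ m < gamma -> in_polydisk m w -> edgeB beta gamma m w <> Cx0.
Proof.
  intros Hb Hg Hbound Hw HB.
  set (r := fun i => Cxmod (Cxadd Cx1 (w i))).
  set (t := fun i => Cxarg (Cxadd Cx1 (w i))).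
  assert (Ht : forall i, (i < m)%nat -> Rabs (t i) < PI / 2 /\ 0 <= r i <= 2 * cos (Rabs (t i))).
  { intros i Hi; destruct (polar_disk_shift (w i) (Hw i Hi)) as [_ [Habs Hr]].
    split; [exact Habs | split; [apply sqrt_pos |]].
    destruct (Rcase_abs (t i)); [rewrite Rabs_left, cos_neg | rewrite Rabs_right]; auto. }
  assert (HR : 0 <= Rprod m r) by (apply Rprod_nonneg; intros i Hi; apply Ht; exact Hi).
  unfold edgeB in HB; rewrite Uprod_polar in HB by exact Hw; fold r t in HB.
  assert (Hre := f_equal re HB); assert (Him := f_equal im HB); simpl in Hre, Him.
  (* [B = 0] makes [U] a negative real *)
  assert (Hcos : cos (Rsum m t) < 0).
  { destruct (Rlt_or_le (cos (Rsum m t)) 0) as [| Hc]; [assumption | exfalso].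
    assert (0 <= beta * (Rprod m r * cos (Rsum m t))) by (apply Rmult_le_pos; [lra | nra]).
    lra. }
  assert (HRpos : 0 < Rprod m r)
    by (destruct HR as [| HR0]; [assumption | rewrite <- HR0 in Hre; lra]).
  assert (Hsin : sin (Rsum m t) = 0).
  { apply Rmult_eq_reg_l with (beta * Rprod m r); [lra |].
    apply Rmult_integral_contrapositive_currified; lra. }
  assert (HU : Rprod m r <= (2 * cos (PI / INR m)) ^ m).
  { apply Rprod_polar_factors_le with t; [exact Ht |].
    eapply Rle_trans; [apply PI_le_Rabs | apply Rsum_abs]; assumption. }
  pose proof (COS_bound (Rsum m t)).
  assert (0 <= beta * Rprod m r * (1 + cos (Rsum m t))) by (apply Rmult_le_pos; nra).
  assert (beta * Rprod m r <= beta * (2 * cos (PI / INR m)) ^ m) by (apply Rmult_le_compat_l; lra).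
  lra.
Qed.

(** * The Lee-Yang property *)

Lemma Cxprod_mul_inv n u : (forall i, (i < n)%nat -> 0 < Cxnorm2 (u i)) ->
  Cxmul (Cxprod n u) (Cxprod n (fun i => Cxinv (u i))) = Cx1.
Proof.
  intros Hu; rewrite <- Cxprod_mul, <- (Cxprod_one n).
  apply Cxprod_ext; intros i Hi; apply Cxmul_inv, Hu, Hi.
Qed.

Lemma Cxprod_add1_inv n u : (forall i, (i < n)%nat -> 0 < Cxnorm2 (u i)) ->
  Cxprod n (fun i => Cxadd Cx1 (u i)) = Cxmul (Cxprod n u) (Uprod n (fun i => Cxinv (u i))).
Proof.
  intros Hu; unfold Uprod; rewrite <- Cxprod_mul.
  apply Cxprod_ext; intros i Hi; rewrite <- (Cxmul_inv (u i)) at 1 by (apply Hu, Hi); ring.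
Qed.

Lemma ising_edge_split n j beta z : (j < S n)%nat ->
  (forall i, (i < n)%nat -> 0 < Cxnorm2 (z (skip j i))) ->
  ising_edge (S n) beta z =
  Cxmul (Cxprod n (fun i => z (skip j i)))
        (Cxadd (edgeA beta (1 - beta) n (fun i => Cxinv (z (skip j i))))
               (Cxmul (z j) (edgeB beta (1 - beta) n (fun i => Cxinv (z (skip j i)))))).
Proof.
  intros Hj Hz.
  unfold ising_edge, edgeA, edgeB.
  rewrite (Cxprod_skip n j (fun i => Cxadd Cx1 (z i))), (Cxprod_skip n j z) by exact Hj.
  cbv beta; rewrite (Cxprod_add1_inv n _ Hz).
  pose proof (Cxprod_mul_inv n _ Hz) as Hinv.
  set (v := Cxprod n (fun i => z (skip j i))) in *.
  set (W := Cxprod n (fun i => Cxinv (z (skip j i)))) in *.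
  set (U := Uprod n (fun i => Cxinv (z (skip j i)))).
  transitivity (Cxadd (Cxmul (Cx_of_R beta) (Cxmul (Cxmul v U) (Cxadd Cx1 (z j))))
                      (Cxmul (Cx_of_R (1 - beta)) (Cxadd (Cxmul v W) (Cxmul v (z j)))));
    [rewrite Hinv; reflexivity | ring].
Qed.

Theorem ising_edge_LeeYang n beta : beta < 1 ->
  - beta * 2 ^ n < 1 - beta -> beta * (2 * cos (PI / INR n)) ^ n < 1 - beta ->
  LeeYang (S n) (ising_edge (S n) beta).
Proof.
  intros Hb Hneg Hpos z Hz [j [Hj Hzj]] HP.
  set (w := fun i => Cxinv (z (skip j i))).
  assert (Hzs : forall i, (i < n)%nat -> 1 <= Cxnorm2 (z (skip j i)))
    by (intros i Hi; apply Cxnorm2_ge1_of_Cxmod, Hz, skip_lt; assumption).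
  assert (Hw : in_polydisk n w) by (intros i Hi; apply Cxnorm2_inv_le1, Hzs, Hi).
  assert (HB : forall w, in_polydisk n w -> edgeB beta (1 - beta) n w <> Cx0).
  { intros w' Hw'; destruct (Rle_or_lt beta 0).
    - apply edgeB_neq0_nonpos; assumption.
    - apply edgeB_neq0_pos; [assumption | lra | assumption | assumption]. }
  pose proof (Cxnorm2_edgeA_le beta (1 - beta) n HB w Hw) as HAB.
  rewrite (ising_edge_split n j) in HP by (auto; intros i Hi; specialize (Hzs i Hi); lra).
  fold w in HP.
  destruct (Cxmul_integral _ _ HP) as [Hv | Hroot].
  - apply (f_equal Cxnorm2) in Hv; rewrite Cxnorm2_Cx0, Cxnorm2_Cxprod in Hv.
    assert (1 <= Rprod n (fun i => Cxnorm2 (z (skip j i)))).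
    { rewrite <- (pow1 n), <- Rprod_const; apply Rprod_le; intros i Hi; split; [lra | auto]. }
    lra.
  - (* |A| = |z_j| |B| > |B| contradicts |A| <= |B| *)
    apply Cxnorm2_eq_of_add_eq0 in Hroot; rewrite Cxnorm2_mul in Hroot.
    pose proof (Cxnorm2_gt1_of_Cxmod _ Hzj).
    assert (0 < Cxnorm2 (edgeB beta (1 - beta) n w)).
    { destruct (Cxnorm2_ge0 (edgeB beta (1 - beta) n w)) as [| E]; [assumption |].
      exfalso; apply (HB w Hw), Cxnorm2_eq0; auto. }
    nra.
Qed.

Lemma cos_PI_div_ge0 n : (2 <= n)%nat -> 0 <= cos (PI / INR n).
Proof.
  intros Hn; pose proof PI_RGT_0.
  assert (HnR : 2 <= INR n) by (replace 2 with (INR 2) by (simpl; ring); apply le_INR, Hn).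
  assert (0 < PI / INR n) by (apply Rdiv_lt_0_compat; lra).
  assert (PI / INR n <= PI / 2)
    by (apply Rmult_le_compat_l; [lra | apply Rinv_le_contravar; lra]).
  apply cos_ge_0; lra.
Qed.

Theorem lemma4p9 (k : nat) (beta : R) (hk : (2 <= k)%nat) :
  ((k = 2%nat /\ -1 < beta < 1) \/
   ((3 <= k)%nat /\
    - (1 / (2 ^ (k - 1) - 1)) < beta /\
    beta < 1 / (2 ^ (k - 1) * (cos (PI / INR (k - 1))) ^ (k - 1) + 1))) ->
  LeeYang k (ising_edge k beta).
Proof.
  intros [[-> Hb] | [Hk [Hlo Hhi]]].
  - apply (ising_edge_LeeYang 1); [lra | simpl; lra |].
    replace (PI / INR 1) with PI by (simpl; field); rewrite cos_PI; simpl; lra.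
  - destruct k as [|n]; [lia|]; replace (S n - 1)%nat with n in * by lia.
    assert (H2n : 4 <= 2 ^ n) by (replace 4 with (2 ^ 2) by ring; apply Rle_pow; [lra | lia]).
    pose proof (cos_PI_div_ge0 n ltac:(lia)) as Hc.
    set (D := 2 ^ n * cos (PI / INR n) ^ n + 1) in Hhi.
    assert (HD : 1 <= D) by (pose proof (pow_le _ n Hc); unfold D; nra).
    apply (Rmult_lt_compat_r D) in Hhi; [| lra].
    replace (1 / D * D) with 1 in Hhi by (field; lra).
    apply (Rmult_lt_compat_r (2 ^ n - 1)) in Hlo; [| lra].
    replace (- (1 / (2 ^ n - 1)) * (2 ^ n - 1)) with (-1) in Hlo by (field; lra).
    apply ising_edge_LeeYang; [nra | lra |].
    rewrite Rpow_mult_distr; unfold D in Hhi; lra.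
Qed.
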